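(* Let $p>1$ and let $A$ be a complex $r$-matrix of order $n_1\times\cdots\times n_r$. Then \[ \|A\|_p\leq|A|_{p/(p-1)}, \] and equality holds if and only if $A$ is a rank-one matrix.
   Context: An $r$-matrix of order $n_1\times\cdots\times n_r$ is a function on $[n_1]\times\cdots\times[n_r]$ with values $a_{i_1,\ldots,i_r}$. $|A|_q=(\sum|a_{i_1,\ldots,i_r}|^q)^{1/q}$ is the entrywise $\ell^q$ norm. The spectral $p$-norm is $\|A\|_p=\max\{|\sum a_{i_1,\ldots,i_r}\overline{x^{(1)}_{i_1}}\cdots\overline{x^{(r)}_{i_r}}|:\mathbf{x}^{(k)}\in\mathbb{C}^{n_k},\ |\mathbf{x}^{(k)}|_p=1\ \forall k\}$. $A$ is rank-one if there are vectors $\mathbf{x}^{(k)}\in\mathbb{C}^{n_k}$ with $a_{i_1,\ldots,i_r}=x^{(1)}_{i_1}\cdots x^{(r)}_{i_r}$ for all indices. *)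

From HB Require Import structures.
From mathcomp Require Import all_boot all_order all_algebra.
From mathcomp Require Import complex.
From mathcomp Require Import boolp classical_sets reals exp.
Set Implicit Arguments. Unset Strict Implicit. Unset Printing Implicit Defensive.
Import Order.TTheory GRing.Theory Num.Theory.
Local Open Scope ring_scope.

Definition tindex (r : nat) (n : 'I_r -> nat) : finType :=
  {dffun forall k : 'I_r, 'I_(n k)}.

Definition rmatrix (R : realType) (r : nat) (n : 'I_r -> nat) :=
  tindex n -> R[i].

Definition entry_norm (R : realType) (r : nat) (n : 'I_r -> nat)
  (q : R) (A : rmatrix R n) : R :=
  (\sum_(idx : tindex n) (Normc.normc (A idx)) `^ q) `^ (q^-1).

Definition vec_norm (R : realType) (m : nat) (p : R) (x : 'I_m -> R[i]) : R :=
  (\sum_(j < m) (Normc.normc (x j)) `^ p) `^ (p^-1).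

Definition mform (R : realType) (r : nat) (n : 'I_r -> nat)
  (A : rmatrix R n) (x : forall k : 'I_r, 'I_(n k) -> R[i]) : R[i] :=
  \sum_(idx : tindex n) A idx * \prod_(k < r) conjc (x k (idx k)).

(* spectral p-norm: the max (here: sup; the max is attained by compactness)
   of |form| over p-unit vectors *)
Definition spectral_norm (R : realType) (r : nat) (n : 'I_r -> nat)
  (p : R) (A : rmatrix R n) : R :=
  sup [set t : R | exists x : forall k : 'I_r, 'I_(n k) -> R[i],
        (forall k, vec_norm p (x k) = 1) /\ t = Normc.normc (mform A x)]%classic.

Definition rank_one (R : realType) (r : nat) (n : 'I_r -> nat)
  (A : rmatrix R n) : Prop :=
  exists x : forall k : 'I_r, 'I_(n k) -> R[i],
    forall idx : tindex n, A idx = \prod_(k < r) x k (idx k).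

From HB Require Import structures.
From mathcomp Require Import all_boot all_order all_algebra.
From mathcomp Require Import complex.
From mathcomp Require Import boolp classical_sets reals exp.
From mathcomp Require Import ring lra.
From mathcomp Require Import topology normedtype derive.
Set Implicit Arguments. Unset Strict Implicit. Unset Printing Implicit Defensive.
Import Order.TTheory GRing.Theory Num.Theory.
Local Open Scope ring_scope.
Local Open Scope complex_scope.

(** Hölder's inequality with exponents p and q = p/(p-1), applied to the
    moduli of the entries of A and of x^(1) ⊗ ... ⊗ x^(r) (whose l^p norm is
    the product of the l^p norms of the factors), bounds the form by |A|_q.
    For A = y^(1) ⊗ ... ⊗ y^(r) the bound is attained by taking each x^(k)
    dual to y^(k), i.e. proportional to y^(k) |y^(k)|^(q-2).  Conversely the
    supremum defining ||A||_p is attained, the product of the unit spheres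
    being compact; if it equals |A|_q, equality in the triangle inequality
    gives a common phase t of the terms and equality in Hölder gives
    |a| = |A|_q |x^(1) ⊗ ... ⊗ x^(r)|^(p-1), so that
    A = |A|_q t (x^(1)|x^(1)|^(p-2)) ⊗ ... ⊗ (x^(r)|x^(r)|^(p-2)). *)

Section ComplexModulus.
Variable R : rcfType.
Local Notation normc := (@Normc.normc R).

Lemma normc_ge0 (z : R[i]) : 0 <= normc z.
Proof. exact: (@normr_ge0 _ (Rcomplex R)). Qed.

Lemma normc_sum (I : Type) (s : seq I) (P : pred I) (F : I -> R[i]) :
  normc (\sum_(i <- s | P i) F i) <= \sum_(i <- s | P i) normc (F i).
Proof. exact: (@ler_norm_sum _ (Rcomplex R)). Qed.

Lemma normc_prod (I : Type) (s : seq I) (P : pred I) (F : I -> R[i]) :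
  normc (\prod_(i <- s | P i) F i) = \prod_(i <- s | P i) normc (F i).
Proof. exact: (big_morph _ (@Normc.normcM R) (@Normc.normc1 R)). Qed.

Lemma normrE_normc (z : R[i]) : `|z| = (normc z)%:C.
Proof. by case: z. Qed.

Lemma normc_conj (z : R[i]) : normc (conjc z) = normc z.
Proof. by case: z => a b; rewrite /= sqrrN. Qed.

Lemma mulcJ_normc (z : R[i]) : z * conjc z = (normc z ^+ 2)%:C.
Proof. by rewrite -sqr_normc normrE_normc rmorphXn. Qed.

Lemma normc_real (a : R) : normc a%:C = `|a|.
Proof. by rewrite /= expr0n addr0 sqrtr_sqr. Qed.

Lemma normc_ge_Re (z : R[i]) : `|complex.Re z| <= normc z.
Proof.
by case: z => a b; rewrite /= -sqrtr_sqr ler_sqrt ?addr_ge0 ?sqr_ge0 // lerDl sqr_ge0.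
Qed.

Lemma normc_ge_Im (z : R[i]) : `|complex.Im z| <= normc z.
Proof.
by case: z => a b; rewrite /= -sqrtr_sqr ler_sqrt ?addr_ge0 ?sqr_ge0 // lerDr sqr_ge0.
Qed.

Lemma conjcMr_real (z : R[i]) (b : R) : conjc (z * b%:C) = conjc z * b%:C.
Proof.
case: z => a c; apply/eqP; rewrite eq_complex /=.
by rewrite !mulr0 !add0r mulNr !eqxx.
Qed.
End ComplexModulus.

Lemma sum_dffun_prod (S : comPzSemiRingType) (I : finType) (T_ : I -> finType)
    (F : forall i, T_ i -> S) :
  \sum_(t : {dffun forall i, T_ i}) \prod_i F i (t i) =
  \prod_i \sum_(j : T_ i) F i j.
Proof.
rewrite (reindex (@dffun_of_fprod I T_)); last exact/onW_bij/dffun_of_fprod_bij.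
pose P_ i := [ffun j : T_ i => F i j].
transitivity (\sum_(t : fprod T_) \prod_(i in I) P_ i (t i)).
  by apply: eq_bigr => t _; apply: eq_bigr => i _; rewrite !ffunE.
rewrite big_fprod.
transitivity (\prod_i \sum_(j in tagged_with T_ i) untag 0 (P_ i) j).
  by rewrite bigA_distr_big_dep.
apply: eq_bigr => i _; rewrite -(big_tag (fun i => P_ i)).
by apply: eq_bigr => j _; rewrite ffunE.
Qed.

Section Young.
Variable R : realType.

Lemma ln_lt_subr1 (x : R) : 0 < x -> x != 1 -> ln x < x - 1.
Proof.
move=> x0 x1; rewrite ltrBrDl -[X in _ < X](lnK x0) expR_gt1Dx //.
by apply: contra x1 => /eqP lnx0; rewrite -(lnK x0) lnx0 expR0.
Qed.

Variables (p q : R).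
Hypotheses (p0 : 0 < p) (q0 : 0 < q) (pq : p^-1 + q^-1 = 1).

Lemma concave_ln_lt (u v : R) : 0 < u -> 0 < v -> u != v ->
  p^-1 * ln u + q^-1 * ln v < ln (u / p + v / q).
Proof.
move=> u0 v0 uv; have [M defM] : {M | M = u / p + v / q} by eexists.
have M0 : 0 < M by rewrite defM addr_gt0 // divr_gt0.
have ln_le w : 0 < w -> ln (w / M) <= w / M - 1.
  move=> w0; have [->|w1] := eqVneq (w / M) 1; first by rewrite ln1 subrr.
  by rewrite ltW // ln_lt_subr1 // divr_gt0.
have ln_lt w : 0 < w -> w != M -> ln (w / M) < w / M - 1.
  move=> w0 wM; rewrite ln_lt_subr1 ?divr_gt0 //.
  by apply: contra wM => /eqP wM1; rewrite -[w](divfK (lt0r_neq0 M0)) wM1 mul1r.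
have : p^-1 * ln (u / M) + q^-1 * ln (v / M) <
       p^-1 * (u / M - 1) + q^-1 * (v / M - 1).
  have [uM|uM] := eqVneq u M.
    apply: ler_ltD; first by rewrite ler_pM2l ?invr_gt0 // ln_le.
    by rewrite ltr_pM2l ?invr_gt0 // ln_lt // -uM eq_sym.
  apply: ltr_leD; last by rewrite ler_pM2l ?invr_gt0 // ln_le.
  by rewrite ltr_pM2l ?invr_gt0 // ln_lt.
have -> : p^-1 * (u / M - 1) + q^-1 * (v / M - 1) =
    (u / p + v / q) / M - (p^-1 + q^-1) by ring.
rewrite -defM pq divff ?gt_eqF // subrr !ln_div ?posrE //.
have -> : p^-1 * (ln u - ln M) + q^-1 * (ln v - ln M) =
    p^-1 * ln u + q^-1 * ln v - (p^-1 + q^-1) * ln M by ring.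
by rewrite pq mul1r subr_lt0.
Qed.

Lemma young_lt (a b : R) : 0 < a -> 0 < b -> a `^ p != b `^ q ->
  a * b < a `^ p / p + b `^ q / q.
Proof.
move=> a0 b0 ab; rewrite -ltr_ln ?posrE ?mulr_gt0 ?addr_gt0 ?divr_gt0 ?powR_gt0 //.
have ln_a : ln a = p^-1 * ln (a `^ p) by rewrite ln_powR mulKf ?gt_eqF.
have ln_b : ln b = q^-1 * ln (b `^ q) by rewrite ln_powR mulKf ?gt_eqF.
by rewrite lnM ?posrE // ln_a ln_b concave_ln_lt ?powR_gt0.
Qed.

Lemma young_eq (a b : R) : 0 <= a -> 0 <= b ->
  a * b = a `^ p / p + b `^ q / q -> a `^ p = b `^ q.
Proof.
rewrite le_eqVlt => /predU1P[<-|a0]; rewrite le_eqVlt => /predU1P[<-|b0] //.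
- by rewrite mul0r !powR0 ?gt_eqF.
- rewrite mul0r powR0 ?gt_eqF // mul0r add0r => E.
  by have := divr_gt0 (powR_gt0 q b0) q0; rewrite -E ltxx.
- rewrite mulr0 [0 `^ q]powR0 ?gt_eqF // mul0r addr0 => E.
  by have := divr_gt0 (powR_gt0 p a0) p0; rewrite -E ltxx.
move=> E; apply/eqP/negPn/negP => uv.
by have := young_lt a0 b0 uv; rewrite -E ltxx.
Qed.

End Young.

Section ConjugateExponents.
Variables (R : realFieldType) (p q : R).
Hypotheses (p0 : 0 < p) (q0 : 0 < q) (pq : p^-1 + q^-1 = 1).

Lemma conjugate_gt1 : 1 < q.
Proof. by rewrite -invf_lt1 // -pq ltrDr invr_gt0. Qed.

Lemma conjugate_divr : p / q = p - 1.
Proof. by rewrite -(addKr p^-1 q^-1) pq mulrDr mulrN mulfV ?gt_eqF // mulr1 addrC. Qed.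

Lemma conjugate_subr1_mul : (q - 1) * p = q.
Proof.
have qp : q * p = q + p.
  by rewrite -[LHS]mulr1 -pq mulrDr mulfK ?gt_eqF // mulrAC mulfV ?gt_eqF // mul1r.
by rewrite mulrBl mul1r qp addrK.
Qed.

End ConjugateExponents.

Lemma conjugate_exponent (R : realFieldType) (p : R) : 1 < p ->
  p^-1 + (p / (p - 1))^-1 = 1.
Proof.
move=> p1; rewrite invf_div; field.
by rewrite gt_eqF // (lt_trans ltr01).
Qed.

Section Holder.
Variables (R : realType) (p q : R).
Hypotheses (p0 : 0 < p) (q0 : 0 < q) (pq : p^-1 + q^-1 = 1).
Variables (J : finType) (a b : J -> R).
Hypotheses (a_ge0 : forall j, 0 <= a j) (b_ge0 : forall j, 0 <= b j).
Hypothesis b_unit : \sum_j b j `^ p = 1.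

Let S := \sum_j a j `^ q.
Let c := S `^ q^-1.

Let S_ge0 : 0 <= S.
Proof. by rewrite sumr_ge0 // => j _; exact: powR_ge0. Qed.

Let a_eq0 : S = 0 -> forall j, a j = 0.
Proof.
move/eqP; rewrite psumr_eq0 => [/allP a0 j|j _]; last exact: powR_ge0.
by apply: (@powR_eq0_eq0 _ _ q); apply/eqP/(implyP (a0 j _)).
Qed.

Let young_sum : 0 < S ->
  \sum_j ((a j / c) `^ q / q + b j `^ p / p) = 1.
Proof.
move=> S_gt0; rewrite big_split /= -!mulr_suml b_unit mul1r.
have powR_normalized j : (a j / c) `^ q = a j `^ q / S.
  rewrite powRM ?invr_ge0 ?powR_ge0 // -powR_inv1 ?powR_ge0 // -powRrM mulN1r.
  by rewrite powRN -powRrM mulVf ?gt_eqF // powRr1.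
under eq_bigr do rewrite powR_normalized.
by rewrite -mulr_suml divff ?gt_eqF // mul1r addrC.
Qed.

Let sum_normalized : 0 < S ->
  \sum_j a j * b j = c * \sum_j (a j / c) * b j.
Proof.
move=> S_gt0; rewrite mulr_sumr; apply: eq_bigr => j _.
by rewrite mulrA mulrCA divff ?mulr1 // gt_eqF // powR_gt0.
Qed.

Let young_j j : a j / c * b j <= (a j / c) `^ q / q + b j `^ p / p.
Proof.
by apply: conjugate_powR; rewrite ?divr_ge0 ?powR_ge0 // addrC.
Qed.

Lemma holder_unit_le : \sum_j a j * b j <= c.
Proof.
have [S0|S_neq0] := eqVneq S 0.
  by rewrite big1 ?powR_ge0 // => j _; rewrite a_eq0 ?mul0r.
have S_gt0 : 0 < S by rewrite lt_def S_neq0 S_ge0.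
rewrite sum_normalized // -[leRHS]mulr1 ler_wpM2l ?powR_ge0 //.
by rewrite -(young_sum S_gt0); apply: ler_sum => j _; exact: young_j.
Qed.

Lemma holder_unit_eq : \sum_j a j * b j = c ->
  forall j, a j = c * b j `^ (p - 1).
Proof.
have [S0 _ j|S_neq0 E j] := eqVneq S 0.
  by rewrite a_eq0 // /c S0 powR0 ?mul0r // invr_eq0 gt_eqF.
have S_gt0 : 0 < S by rewrite lt_def S_neq0 S_ge0.
have c_gt0 : 0 < c by rewrite powR_gt0.
have sum1 : \sum_j (a j / c) * b j = 1.
  by apply: (mulfI (lt0r_neq0 c_gt0)); rewrite -sum_normalized // E mulr1.
have /eqP : \sum_j ((a j / c) `^ q / q + b j `^ p / p - a j / c * b j) = 0.
  by rewrite sumrB young_sum // sum1 subrr.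
rewrite psumr_eq0 => [/allP/(_ j (mem_index_enum j))|i _]; last first.
  by rewrite subr_ge0 young_j.
rewrite implyTb subr_eq0 => /eqP/esym/young_eq.
have pq' : q^-1 + p^-1 = 1 by rewrite addrC.
move=> /(_ q0 p0 pq' (divr_ge0 (a_ge0 j) (ltW c_gt0)) (b_ge0 j)) ab.
rewrite -(conjugate_divr p0 pq) powRrM -ab -powRrM mulfV ?gt_eqF //.
rewrite powRr1 ?divr_ge0 ?(ltW c_gt0) //.
by rewrite mulrCA divff ?mulr1 // gt_eqF.
Qed.

End Holder.

Lemma powR_prod (R : realType) (I : Type) (s : seq I) (F : I -> R) (x : R) :
  (forall i, 0 <= F i) -> (\prod_(i <- s) F i) `^ x = \prod_(i <- s) F i `^ x.
Proof.
move=> F0; elim: s => [|i s IHs]; first by rewrite !big_nil powR1.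
by rewrite !big_cons powRM ?IHs // prodr_ge0.
Qed.

Section VectorNorm.
Variables (R : realType) (p : R).
Hypothesis p0 : 0 < p.
Local Notation normc := (@Normc.normc R).

Lemma vec_norm_eq1 m (x : 'I_m -> R[i]) :
  vec_norm p x = 1 <-> \sum_j normc (x j) `^ p = 1.
Proof.
rewrite /vec_norm; split => [/eqP|->]; last by rewrite powR1.
rewrite powR_eq1 invr_eq0 (gt_eqF p0) orbF => /orP[/eqP //|].
by rewrite ltNge sumr_ge0 // => j _; rewrite powR_ge0.
Qed.

Lemma vec_norm_eq1_le1 m (x : 'I_m -> R[i]) j : vec_norm p x = 1 -> normc (x j) <= 1.
Proof.
move=> /vec_norm_eq1 x1; rewrite leNgt; apply/negP => xj_gt1.
have : 1 `^ p < normc (x j) `^ p by rewrite gt0_ltr_powR ?nnegrE ?normc_ge0.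
rewrite powR1; apply/negP; rewrite -leNgt -x1 (bigD1 j) //= lerDl.
by rewrite sumr_ge0 // => i _; exact: powR_ge0.
Qed.

End VectorNorm.

Section Tensors.
Variables (R : realType) (r : nat) (n : 'I_r -> nat).
Local Notation normc := (@Normc.normc R).
Local Notation family := (forall k : 'I_r, 'I_(n k) -> R[i]).

Definition unit_family (p : R) (x : family) : Prop := forall k, vec_norm p (x k) = 1.

Lemma exists_unit_family (p : R) : 0 < p -> (forall k, (0 < n k)%N) ->
  exists x, unit_family p x.
Proof.
move=> p0 n0; exists (fun k j => ((val j == 0)%:R : R)%:C) => k.
apply/vec_norm_eq1 => //; rewrite (bigD1 (Ordinal (n0 k))) // big1 => [|j j0].
  by rewrite normc_real eqxx normr1 powR1; exact: addr0.
have /negbTE -> : val j != 0%N by apply: contra j0 => /eqP jk; apply/eqP/val_inj.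
by rewrite normc_real normr0 powR0 ?gt_eqF.
Qed.

Lemma sum_powR_prod_normc (x : family) (s : R) :
  \sum_(idx : tindex n) (\prod_k normc (x k (idx k))) `^ s =
  \prod_k \sum_j normc (x k j) `^ s.
Proof.
rewrite -(sum_dffun_prod (fun k j => normc (x k j) `^ s)).
by apply: eq_bigr => idx _; rewrite powR_prod // => k; exact: normc_ge0.
Qed.

Lemma entry_norm_rank_one (q : R) (x : family) :
  entry_norm q (fun idx => \prod_k x k (idx k)) = \prod_k vec_norm q (x k).
Proof.
rewrite /entry_norm (eq_bigr (fun idx : tindex n => (\prod_k normc (x k (idx k))) `^ q)).
  2: by move=> idx _; rewrite normc_prod.
rewrite sum_powR_prod_normc powR_prod // => k.
by rewrite sumr_ge0 // => j _; exact: powR_ge0.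
Qed.

Variable A : rmatrix R n.

Lemma normc_mform_le (x : family) :
  normc (mform A x) <= \sum_idx normc (A idx) * \prod_k normc (x k (idx k)).
Proof.
apply: le_trans (normc_sum _ _ _) _; apply: ler_sum => idx _.
by rewrite Normc.normcM normc_prod; under eq_bigr do rewrite normc_conj.
Qed.

Variables (p q : R).
Hypotheses (p0 : 0 < p) (q0 : 0 < q) (pq : p^-1 + q^-1 = 1).

Lemma mform_le_entry_norm (x : family) : unit_family p x ->
  normc (mform A x) <= entry_norm q A.
Proof.
move=> x1; apply: le_trans (normc_mform_le x) _.
apply: (holder_unit_le p0 q0 pq) => [idx|idx|]; rewrite ?normc_ge0 ?prodr_ge0 //.
  by move=> k _; exact: normc_ge0.
by rewrite sum_powR_prod_normc big1 // => k _; apply/vec_norm_eq1.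
Qed.

End Tensors.

Section DualVector.
Variables (R : realType) (p q : R).
Hypotheses (p0 : 0 < p) (q0 : 0 < q) (pq : p^-1 + q^-1 = 1).
Local Notation normc := (@Normc.normc R).

Definition dual_vector m (x : 'I_m -> R[i]) (j : 'I_m) : R[i] :=
  x j * ((\sum_i normc (x i) `^ q) `^ (- p^-1) * normc (x j) `^ (q - 2))%:C.

Variables (m : nat) (x : 'I_m -> R[i]).
Let s := \sum_i normc (x i) `^ q.
Let c := s `^ (- p^-1).

Let s_ge0 : 0 <= s.
Proof. by rewrite sumr_ge0 // => i _; exact: powR_ge0. Qed.

Let normc_dual_vector j : normc (dual_vector x j) = c * normc (x j) `^ (q - 1).
Proof.
have q1 : 0 < q - 1 by rewrite subr_gt0 (conjugate_gt1 p0 q0 pq).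
rewrite Normc.normcM normc_real ger0_norm ?mulr_ge0 ?powR_ge0 //.
have -> : q - 2 = q - 1 - 1 by lra.
by rewrite mulrCA (mulr_powRB1 (normc_ge0 _) q1).
Qed.

Lemma vec_norm_dual_vector : 0 < vec_norm q x -> vec_norm p (dual_vector x) = 1.
Proof.
move=> x_gt0; have s_gt0 : 0 < s.
  rewrite lt_def s_ge0 andbT; apply: contraTneq x_gt0 => s0.
  by rewrite /vec_norm -/s s0 powR0 ?invr_eq0 ?gt_eqF // ltxx.
apply/(vec_norm_eq1 p0).
under eq_bigr do
  rewrite normc_dual_vector powRM ?powR_ge0 // -powRrM (conjugate_subr1_mul p0 q0 pq).
rewrite -mulr_sumr -/s /c -powRrM mulNr mulVf ?gt_eqF //.
by rewrite powR_inv1 // mulVf ?gt_eqF.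
Qed.

Lemma dual_vector_pairing : \sum_j x j * conjc (dual_vector x j) = (vec_norm q x)%:C.
Proof.
transitivity ((c * s)%:C); last first.
  congr (_%:C); rewrite /vec_norm -/s /c -{2}(powRr1 s_ge0) -powRD; last first.
    by rewrite -pq addKr invr_eq0 gt_eqF.
  by rewrite -pq addKr.
rewrite mulr_sumr rmorph_sum; apply: eq_bigr => j _.
rewrite /dual_vector conjcMr_real mulrA mulcJ_normc -rmorphM; congr (_%:C).
rewrite mulrCA expr2 -mulrA.
have -> : q - 2 = q - 1 - 1 by lra.
rewrite (mulr_powRB1 (normc_ge0 _)) ?subr_gt0 ?(conjugate_gt1 p0 q0 pq) //.
by rewrite (mulr_powRB1 (normc_ge0 _)).
Qed.

End DualVector.

Section RankOne.
Variables (R : realType) (r : nat) (n : 'I_r -> nat).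
Local Notation normc := (@Normc.normc R).
Local Notation family := (forall k : 'I_r, 'I_(n k) -> R[i]).

Lemma mform_rank_one (x y : family) :
  mform (fun idx => \prod_k x k (idx k)) y =
  \prod_k \sum_j x k j * conjc (y k j).
Proof.
rewrite /mform -(sum_dffun_prod (fun k j => x k j * conjc (y k j))).
by apply: eq_bigr => idx _; rewrite big_split.
Qed.

Lemma rank_one_scale (c : R[i]) (y : family) : (0 < r)%N ->
  rank_one (fun idx : tindex n => c * \prod_k y k (idx k)).
Proof.
move=> r0; pose k0 := Ordinal r0.
exists (fun k j => if k == k0 then c * y k j else y k j) => idx.
rewrite [RHS](bigD1 k0) //= ?eqxx [in LHS](bigD1 k0) //= mulrA; congr (_ * _).
by apply: eq_bigr => k /negbTE ->.
Qed.

End RankOne.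

Section Extremal.
Variables (R : realType) (r : nat) (n : 'I_r -> nat) (A : rmatrix R n).
Variables (p q : R).
Hypotheses (p0 : 0 < p) (q0 : 0 < q) (pq : p^-1 + q^-1 = 1).
Local Notation normc := (@Normc.normc R).
Local Notation family := (forall k : 'I_r, 'I_(n k) -> R[i]).

Lemma rank_one_entry_norm_le : (forall k, (0 < n k)%N) -> rank_one A ->
  exists2 y, unit_family p y & entry_norm q A <= normc (mform A y).
Proof.
move=> n0 [x Ax]; have -> : A = fun idx => \prod_k x k (idx k) by apply/funext.
rewrite entry_norm_rank_one.
have [x_gt0|] := pselect (forall k, 0 < vec_norm q (x k)).
  exists (fun k => dual_vector p q (x k)) => [k|]; first exact: vec_norm_dual_vector.
  rewrite mform_rank_one (eq_bigr (fun k => (vec_norm q (x k))%:C)) => [|k _].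
    rewrite -(rmorph_prod (real_complex R)) normc_real ger0_norm // prodr_ge0 //.
    by move=> k _; exact: powR_ge0.
  exact: dual_vector_pairing.
move=> /existsNP[k /negP]; rewrite -leNgt => xk_le0.
have xk0 : vec_norm q (x k) = 0 by apply/le_anti; rewrite xk_le0 powR_ge0.
have [y y1] := exists_unit_family p0 n0; exists y => //.
by rewrite (bigD1 k) //= xk0 mul0r normc_ge0.
Qed.

Local Notation weight x idx := (\prod_k normc (x k (idx k))).

Lemma extremal_holder_eq (x : family) : unit_family p x ->
  normc (mform A x) = entry_norm q A ->
  normc (mform A x) = \sum_idx normc (A idx) * weight x idx /\
  forall idx, normc (A idx) = entry_norm q A * weight x idx `^ (p - 1).
Proof.
move=> x1 x_max.
have w_ge0 (idx : tindex n) : 0 <= weight x idx.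
  by rewrite prodr_ge0 // => k _; exact: normc_ge0.
have w_unit : \sum_(idx : tindex n) weight x idx `^ p = 1.
  by rewrite sum_powR_prod_normc big1 // => k _; apply/(vec_norm_eq1 p0).
have holder : \sum_idx normc (A idx) * weight x idx <= entry_norm q A.
  exact: (@holder_unit_le _ _ _ p0 q0 pq _ (fun idx => normc (A idx))
    (fun idx => weight x idx) (fun idx => normc_ge0 (A idx)) w_ge0 w_unit).
have holder_eq : \sum_idx normc (A idx) * weight x idx = entry_norm q A.
  by apply/le_anti/andP; split; rewrite // -x_max; exact: normc_mform_le.
split.
  by apply/le_anti/andP; split; [exact: normc_mform_le | rewrite holder_eq x_max].
exact: (@holder_unit_eq _ _ _ p0 q0 pq _ (fun idx => normc (A idx))
  (fun idx => weight x idx) (fun idx => normc_ge0 (A idx)) w_ge0 w_unit holder_eq).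
Qed.

Lemma extremal_phase (x : family) : unit_family p x ->
  normc (mform A x) = entry_norm q A ->
  exists t : R[i], forall idx,
    A idx * conjc (\prod_k x k (idx k)) = (normc (A idx) * weight x idx)%:C * t.
Proof.
move=> x1 x_max; have [triangle_eq _] := extremal_holder_eq x1 x_max.
pose F idx := A idx * \prod_k conjc (x k (idx k)).
have normF idx : `|F idx| = (normc (A idx) * weight x idx)%:C.
  rewrite normrE_normc Normc.normcM normc_prod.
  by under eq_bigr do rewrite normc_conj.
have [|t _ Ft] := @normC_sum_eq _ _ xpredT F.
  rewrite normrE_normc -[\sum_i F i]/(mform A x) triangle_eq rmorph_sum.
  by apply: eq_bigr => idx _; rewrite normF.
by exists t => idx; rewrite (rmorph_prod (@conjc R)) -normF; exact: Ft.
Qed.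

Lemma extremal_rank_one (x : family) : (0 < r)%N -> unit_family p x ->
  normc (mform A x) = entry_norm q A -> rank_one A.
Proof.
move=> r0 x1 x_max; have [_ modulus] := extremal_holder_eq x1 x_max.
have [t phase] := extremal_phase x1 x_max.
have p1 : 0 < p - 1 by rewrite subr_gt0 (conjugate_gt1 q0 p0) // addrC.
pose y k j := x k j * (normc (x k j) `^ (p - 2))%:C.
suff -> : A = fun idx => ((entry_norm q A)%:C * t) * \prod_k y k (idx k).
  exact: rank_one_scale.
apply/funext => idx; set w := weight x idx; set P := \prod_k x k (idx k).
have w_ge0 : 0 <= w by rewrite prodr_ge0 // => k _; exact: normc_ge0.
have -> : \prod_k y k (idx k) = P * (w `^ (p - 2))%:C.
  rewrite big_split /= -(rmorph_prod (real_complex R)) powR_prod // => k.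
  exact: normc_ge0.
have normP : normc P = w by rewrite normc_prod.
have [w0|w_neq0] := eqVneq w 0.
  have -> : A idx = 0.
    by apply: Normc.eq0_normc; rewrite modulus -/w w0 powR0 ?mulr0 ?gt_eqF.
  have -> : P = 0 by apply: Normc.eq0_normc; rewrite normP.
  by rewrite mul0r mulr0.
have w2_neq0 : (w ^+ 2)%:C != 0 :> R[i] by rewrite (inj_eq (@complexI R)) sqrf_eq0.
have phase_idx : A idx * (w ^+ 2)%:C = (normc (A idx) * w)%:C * t * P.
  by rewrite -[_ * t]phase -mulrA (mulrC (conjc P)) mulcJ_normc normP.
have e1 : entry_norm q A * w `^ (p - 1) * w = entry_norm q A * w `^ p.
  by rewrite -mulrA [_ * w]mulrC mulr_powRB1.
have e2 : w `^ (p - 2) * w ^+ 2 = w `^ p.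
  have -> : p - 2 = p - 1 - 1 by lra.
  by rewrite mulrC expr2 -mulrA (mulr_powRB1 w_ge0 p1) mulr_powRB1.
apply: (mulIf w2_neq0); rewrite phase_idx modulus -/w e1 -e2 !rmorphM; ring.
Qed.

End Extremal.

Section Continuity.
Import numFieldNormedType.Exports.
Variable R : realType.
Local Notation normc := (@Normc.normc R).
Local Notation C := (R[i])^o.

Lemma real_complex_continuous : continuous (fun a : R => a%:C : C).
Proof.
move=> a; apply/cvgrPdist_lt => e; rewrite ltcE /= => /andP[/eqP Ime Ree].
have /cvgrPdist_lt/(_ _ Ree) := @cvg_id _ (nbhs a).
apply: filterS => b ab.
by rewrite -rmorphB normrE_normc normc_real [e]complexE Ime mulr0 addr0 ltcR.
Qed.

Lemma normc_continuous : continuous (normc : C -> R).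
Proof.
move=> z; apply/(@cvgrPdist_lt _ _ _ (nbhs z)) => e e0; apply/(@nbhs_normP _ C).
exists e%:C => /= [|w zw]; first by rewrite ltcR.
rewrite -ltcR; apply: le_lt_trans zw; have := ler_dist_dist (z : R[i]) w.
by rewrite [`|z|]normrE_normc [`|w|]normrE_normc -rmorphB normrE_normc normc_real.
Qed.

Lemma conjc_continuous : continuous (@conjc R : C -> C).
Proof.
move=> z; apply/(@cvgrPdist_lt _ _ _ (nbhs z)) => e e0; apply/(@nbhs_normP _ C).
by exists e => //= w; rewrite -rmorphB normcJ.
Qed.

(* [a `^ s] is [1] for [a < 0], hence the nonnegativity of [g]. *)
Lemma continuous_powR (T : topologicalType) (g : T -> R) (s : R) :
  0 < s -> (forall t, 0 <= g t) -> continuous g ->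
  continuous (fun t => g t `^ s).
Proof.
move=> s0 g0 g_cont t; have [gt0|] := ltP 0 (g t).
  have powR_cont : {for g t, continuous (fun a : R => a `^ s)}.
    apply/differentiable_continuous/derivable1_diffP.
    by apply: derivable_powR; rewrite in_itv /= gt0.
  exact: continuous_comp (g_cont t) powR_cont.
rewrite le_eqVlt ltNge g0 orbF => /eqP gt0.
apply/cvgrPdist_lt => e e0; have d0 : 0 < e `^ s^-1 by rewrite powR_gt0.
have /cvgrPdist_lt/(_ _ d0) := g_cont t; apply: filterS => u.
rewrite gt0 powR0 ?gt_eqF // !sub0r !normrN !ger0_norm ?powR_ge0 // => gu.
have -> : e = (e `^ s^-1) `^ s by rewrite -powRrM mulVf ?gt_eqF // powRr1 // ltW.
by rewrite gt0_ltr_powR // nnegrE // ltW.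
Qed.

End Continuity.

Section Maximizer.
Import numFieldNormedType.Exports.
Local Open Scope classical_set_scope.
Variables (R : realType) (r : nat) (n : 'I_r -> nat).
Local Notation normc := (@Normc.normc R).
Local Notation C := (R[i])^o.
Local Notation family := (forall k : 'I_r, 'I_(n k) -> R[i]).
Local Notation coord := ({k : 'I_r & 'I_(n k)} * bool)%type.
Local Notation X := {ptws coord -> R}.

(* Families of vectors are identified with their real and imaginary parts, so
   that the product of the unit spheres is a closed subset of a box of the
   product space X, compact by Tychonoff's theorem. *)
Definition to_coords (x : family) (t : coord) : R :=
  let v := x (tag t.1) (tagged t.1) in if t.2 then complex.Im v else complex.Re v.

Definition of_coords (f : coord -> R) : family :=
  fun k j => (f (Tagged _ j, false))%:C + 'i * (f (Tagged _ j, true))%:C.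
Arguments of_coords f k j : clear implicits.

Lemma to_coordsK : cancel to_coords of_coords.
Proof.
move=> x; apply: functional_extensionality_dep => k; apply: funext => j.
by rewrite [RHS]complexE.
Qed.

Lemma of_coords_continuous k j : continuous (fun f : X => of_coords f k j : C).
Proof.
have coord_cont (t : coord) : continuous (fun f : X => (f t)%:C : C).
  move=> f; apply: (continuous_comp (@proj_continuous _ (fun=> R) t f)).
  exact: real_complex_continuous.
move=> f; exact: (cvgD (coord_cont _ f) (cvgM (cvg_cst ('i : C)) (coord_cont _ f))).
Qed.

Variable A : rmatrix R n.

Lemma mform_of_coords_continuous :
  continuous (fun f : X => mform A (of_coords f) : C).
Proof.
have prod_cont (idx : tindex n) :
    continuous (fun f : X => \prod_k conjc (of_coords f k (idx k)) : C).
  apply: (@continuous_big C _ *%R 1 xpredT mul_continuous X (index_enum _)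
    (fun k f => conjc (of_coords f k (idx k)) : C)) => k _ f.
  exact: continuous_comp (@of_coords_continuous _ _ f) (@conjc_continuous _ _).
have := @continuous_big C _ +%R 0 xpredT add_continuous X (index_enum _)
  (fun idx f => A idx * \prod_k conjc (of_coords f k (idx k)) : C).
apply => idx _ f; exact: (cvgM (cvg_cst (A idx : C)) (prod_cont idx f)).
Qed.

Variable p : R.
Hypothesis p0 : 0 < p.

Lemma powR_sum_of_coords_continuous k :
  continuous (fun f : X => \sum_j normc (of_coords f k j) `^ p).
Proof.
apply: (@continuous_big R _ +%R 0 xpredT add_continuous X (index_enum _)
  (fun j f => normc (of_coords f k j) `^ p)) => j _.
apply: continuous_powR => // [f|]; first exact: normc_ge0.
move=> f; exact: continuous_comp (@of_coords_continuous _ _ f) (@normc_continuous _ _).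
Qed.

Let box : set X := [set f | forall t, `[-1, 1] (f t)].
Let spheres : set X :=
  \bigcap_k ((fun f => \sum_j normc (of_coords f k j) `^ p) @^-1` [set 1]).

Lemma compact_unit_coords : compact (box `&` spheres).
Proof.
apply: compact_closedI.
  exact: (tychonoff (fun=> @segment_compact R (-1) 1)).
apply: closed_bigI => k _; apply: preimage_closed => [f _|].
  exact: powR_sum_of_coords_continuous.
exact: closed_eq.
Qed.

Lemma to_coords_unit (x : family) : unit_family p x -> (box `&` spheres) (to_coords x).
Proof.
move=> x1; split => [[[k j] b]|k _].
  rewrite /= in_itv /= -ler_norml; apply: le_trans (vec_norm_eq1_le1 p0 j (x1 k)).
  by case: b; [exact: normc_ge_Im | exact: normc_ge_Re].
change (\sum_j normc (of_coords (to_coords x) k j) `^ p = 1).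
by rewrite to_coordsK; apply/(vec_norm_eq1 p0).
Qed.

Lemma of_coords_unit (f : X) : (box `&` spheres) f -> unit_family p (of_coords f).
Proof. by move=> [_ f1] k; apply/(vec_norm_eq1 p0); exact: f1. Qed.

Lemma exists_mform_maximizer : (forall k, (0 < n k)%N) ->
  exists2 x, unit_family p x &
    forall y, unit_family p y -> normc (mform A y) <= normc (mform A x).
Proof.
move=> n0; have [x1 x1_unit] := exists_unit_family p0 n0.
have K0 : (box `&` spheres) !=set0 by exists (to_coords x1); exact: to_coords_unit.
have G_cont : {within box `&` spheres,
    continuous (fun f : X => normc (mform A (of_coords f)))}.
  apply: continuous_subspaceT => f.
  exact: continuous_comp (@mform_of_coords_continuous f) (@normc_continuous _ _).
have [f /set_mem Kf f_max] := compact_EVT_max K0 compact_unit_coords G_cont.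
exists (of_coords f) => [|y y1]; first exact: of_coords_unit.
by rewrite -[y]to_coordsK; apply/f_max/mem_set/to_coords_unit.
Qed.

Lemma spectral_normE (x : family) : unit_family p x ->
  (forall y, unit_family p y -> normc (mform A y) <= normc (mform A x)) ->
  spectral_norm p A = normc (mform A x).
Proof.
rewrite /spectral_norm; set S := (X in sup X); move=> x1 x_max.
have Sx : S (normc (mform A x)) by exists x.
have ubSx : ubound S (normc (mform A x)) by move=> _ [y [y1 ->]]; exact: x_max.
have S0 : S !=set0 by exists (normc (mform A x)).
apply/le_anti/andP; split; first exact: ge_sup S0 ubSx.
by apply: sup_upper_bound => //; split => //; exists (normc (mform A x)).
Qed.

End Maximizer.

Theorem theorem20 (R : realType) (r : nat) (n : 'I_r -> nat)
  (hr : (0 < r)%N) (hn : forall k, (0 < n k)%N)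
  (p : R) (hp : 1 < p) (A : rmatrix R n) :
  spectral_norm p A <= entry_norm (p / (p - 1)) A /\
  (spectral_norm p A = entry_norm (p / (p - 1)) A <-> rank_one A).
Proof.
have p0 : 0 < p := lt_trans ltr01 hp.
have q0 : 0 < p / (p - 1) by rewrite divr_gt0 // subr_gt0.
have pq := conjugate_exponent hp.
have [x x1 x_max] := exists_mform_maximizer A p0 hn.
have -> := spectral_normE x1 x_max.
have holder := mform_le_entry_norm A p0 q0 pq x1.
split=> //; split=> [|A1]; first by move/(extremal_rank_one p0 q0 pq hr x1).
have [y y1 y_ge] := rank_one_entry_norm_le p0 q0 pq hn A1.
by apply/le_anti; rewrite holder (le_trans y_ge (x_max y y1)).
Qed.
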